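(* Let $m,n,a$ be integers satisfying $0\le a\le m\le n$. Then $$B_m=(-1)^{a}\sum_{k=1}^{n+1}\frac{(-1)^{k+1}}{k}\binom{n+1}{k}\left[\sum_{i=1}^{k-1}i^a(k-i)^{m-a}+\delta_{a,m}\,k^m\right],$$ where $\delta_{a,m}$ is the Kronecker delta. Furthermore, if $m\ge 2$, then $$B_m=(-1)^{a}\sum_{k=1}^{n+1}\frac{(-1)^{k+1}}{k}\binom{n+1}{k}\sum_{i=1}^{k-1}i^a(k-i)^{m-a}.$$
   Context: The Bernoulli numbers $B_m$ ($m\ge 0$) are defined by the generating function $\frac{x}{e^x-1}=\sum_{m=0}^{\infty}\frac{B_m}{m!}x^m$ (so $B_1=-1/2$). An empty sum (e.g. $\sum_{i=1}^{0}$) is $0$; in the sums all bases $i$, $k-i$, $k$ are positive integers, and $t^0=1$. *)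

From mathcomp Require Import all_boot all_order all_algebra.
Set Implicit Arguments. Unset Strict Implicit. Unset Printing Implicit Defensive.
Import Order.TTheory GRing.Theory Num.Theory.
Local Open Scope ring_scope.

(* Bernoulli numbers, characterised by the generating function
     x / (e^x - 1) = \sum_m B_m x^m / m!,
   i.e. the formal power series identity
     (e^x - 1) * (\sum_m B_m x^m / m!) = x.
   Comparing coefficients of x^N (e^x - 1 = \sum_{j>=1} x^j / j!):
     \sum_{k=0}^{N} [N-k >= 1] / (N-k)! * B_k / k!  =  [N == 1].
   This determines B uniquely (B_1 = -1/2 in this convention). *)
Definition bernoulli_gf (B : nat -> rat) : Prop :=
  forall N : nat,
    \sum_(0 <= k < N.+1)
       ((0 < N - k)%N%:R / ((N - k)`!)%:R) * (B k / (k`!)%:R)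
    = (N == 1)%:R.

From mathcomp Require Import all_boot all_order all_algebra.
From mathcomp Require Import zify ring.
Set Implicit Arguments. Unset Strict Implicit. Unset Printing Implicit Defensive.
Import GRing.Theory Num.Theory.
Local Open Scope ring_scope.

(* Let S_k := \sum_(0 <= i < k) i^(m-a) (k-i)^a; the bracket in the theorem is S_k,
   its delta term being the summand i = 0.  Expanding (k-i)^a binomially and
   summing the powers of i with Faulhaber's formula shows that S_k is the value
   at k of a polynomial of degree at most m+1 without constant term whose
   coefficient of X is (-1)^a B_m.  Since \sum_(1 <= k <= N) (-1)^(k+1) C(N,k) k^e
   is 1 for e = 0 and 0 for 0 < e < N, the weights (-1)^(k+1) C(N,k) / k pick
   out exactly the coefficient of X of such a polynomial when its degree is at
   most N.  For m >= 2, removing the monomial k^m does not change it. *)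

Lemma natr_fact_neq0 (R : numDomainType) (n : nat) : n`!%:R != 0 :> R.
Proof. by rewrite pnatr_eq0 -lt0n fact_gt0. Qed.

Lemma binomial_div_fact (R : numFieldType) (r l : nat) : (l <= r)%N ->
  'C(r, l)%:R / r`!%:R = (l`! * (r - l)`!)%:R^-1 :> R.
Proof.
move=> lelr; rewrite -(bin_fact lelr) [in LHS]natrM invfM mulrA mulfV ?mul1r //.
by rewrite pnatr_eq0 -lt0n bin_gt0.
Qed.

Lemma exprD1_sub_div_fact (R : numFieldType) (x : R) (r : nat) :
  ((x + 1) ^+ r.+1 - x ^+ r.+1) / r.+1`!%:R
  = \sum_(0 <= l < r.+1) x ^+ l / (l`! * (r.+1 - l)`!)%:R.
Proof.
rewrite [x + 1]addrC exprDn big_ord_recr /= subnn expr0 mul1r binn mulr1n addrK.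
rewrite big_mkord mulr_suml; apply: eq_bigr => l _.
by rewrite expr1n mul1r -mulr_natr -mulrA binomial_div_fact // ltnW.
Qed.

Lemma sum_nat_triangle (R : nmodType) (p : nat) (F : nat -> nat -> R) :
  \sum_(0 <= i < p.+1) \sum_(0 <= j < (p - i).+1) F i j
  = \sum_(0 <= j < p.+1) \sum_(0 <= i < (p - j).+1) F i j.
Proof.
have widen (G : nat -> nat -> R) i : (i < p.+1)%N ->
    \sum_(0 <= j < (p - i).+1) G i j = \sum_(0 <= j < p.+1 | (i + j <= p)%N) G i j.
  move=> ltip; rewrite (@big_nat_widen _ _ _ 0 (p - i).+1 p.+1) ?ltnS ?leq_subr //.
  by apply: eq_bigl => j; apply/idP/idP; lia.
under eq_big_nat => i /andP[_ ltip] do rewrite (widen F i ltip).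
rewrite (exchange_big_dep_nat xpredT) //=; apply: eq_big_nat => j /andP[_ ltjp].
by rewrite (widen (fun j i => F i j)) //; apply: eq_bigl => i; rewrite addnC.
Qed.

Lemma sum_pow_mul_pow_rev (R : comPzSemiRingType) (a m k : nat) :
    (a <= m)%N -> (0 < k)%N ->
  \sum_(1 <= i < k) i%:R ^+ a * (k - i)%:R ^+ (m - a) + (a == m)%:R * k%:R ^+ m
  = \sum_(0 <= i < k) i%:R ^+ (m - a) * (k - i)%:R ^+ a :> R.
Proof.
case: k => // k leam _.
rewrite big_add1 /= [RHS]big_nat_recl // big_nat_rev /= expr0n subn0 [RHS]addrC.
congr (_ + _).
  apply: eq_big_nat => i /andP[_ ltik].
  have -> : (0 + k - i.+1).+1 = (k - i)%N by lia.
  by rewrite subSS mulrC (_ : (k.+1 - (k - i))%N = i.+1) //; lia.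
case: eqP => [->|neqam]; first by rewrite subnn.
by rewrite mul0r (_ : (m - a == 0)%N = false) ?mul0r //; lia.
Qed.

Lemma sum_sign_binom_pow (R : comPzRingType) (N l : nat) : (l < N)%N ->
  \sum_(k < N.+1) (-1) ^+ k * 'C(N, k)%:R * k%:R ^+ l = 0 :> R.
Proof.
elim/ltn_ind: l N => -[_|l IHl] [|N] // ltlN.
  transitivity ((1 - 1 : R) ^+ N.+1); last by rewrite subrr expr0n.
  rewrite exprDn; apply: eq_bigr => k _.
  by rewrite expr1n mul1r expr0 mulr1 mulr_natr.
rewrite big_ord_recl expr0n mulr0 add0r.
have absorb k : (-1) ^+ k.+1 * 'C(N.+1, k.+1)%:R * k.+1%:R ^+ l.+1
    = - N.+1%:R * \sum_(j < l.+1) 'C(l, j)%:R * ((-1) ^+ k * 'C(N, k)%:R * k%:R ^+ j) :> R.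
  have binS : 'C(N.+1, k.+1)%:R * k.+1%:R = N.+1%:R * 'C(N, k)%:R :> R.
    by rewrite -!natrM mulnC -mul_bin_diag.
  transitivity ((-1) ^+ k.+1 * (N.+1%:R * 'C(N, k)%:R) * k.+1%:R ^+ l :> R).
    by rewrite -binS [k.+1%:R ^+ l.+1]exprSr -!mulrA [_ ^+ l * _]mulrC.
  rewrite -[k.+1%:R]natr1 addrC exprDn !mulr_sumr; apply: eq_bigr => j _.
  rewrite expr1n mul1r exprS -mulr_natr; set s := (-1) ^+ k; ring.
under eq_bigr => k _ do rewrite lift0 absorb.
rewrite -mulr_sumr exchange_big /=.
by rewrite big1 ?mulr0 // => j _; rewrite -mulr_sumr IHl ?mulr0 //; have := ltn_ord j; lia.
Qed.

Lemma sum_sign_binom_pow_pos (R : comPzRingType) (N e : nat) : (e < N)%N ->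
  \sum_(1 <= k < N.+1) (-1) ^+ k.+1 * 'C(N, k)%:R * k%:R ^+ e = (e == 0)%:R :> R.
Proof.
move=> lteN; have := sum_sign_binom_pow R lteN.
rewrite big_ord_recl mul1r bin0 mul1r expr0n => /eqP.
rewrite addrC addr_eq0 -eqr_oppLR => /eqP <-; rewrite -sumrN big_add1 big_mkord.
by apply: eq_bigr => k _; rewrite lift0 exprS mulN1r !mulNr.
Qed.

Lemma sum_sign_binom_horner (R : numFieldType) (N : nat) (p : {poly R}) :
    p`_0 = 0 -> (size p <= N.+2)%N ->
  \sum_(1 <= k < N.+2) (-1) ^+ k.+1 / k%:R * 'C(N.+1, k)%:R * p.[k%:R] = p`_1.
Proof.
move=> p0 size_p.
have monomial e : (e <= N)%N ->
    \sum_(1 <= k < N.+2) (-1) ^+ k.+1 / k%:R * 'C(N.+1, k)%:R * (p`_e.+1 * k%:R ^+ e.+1)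
    = p`_e.+1 * (e == 0)%:R.
  move=> leeN; rewrite -(@sum_sign_binom_pow_pos _ N.+1) // mulr_sumr.
  apply: eq_big_nat => k /andP[k_gt0 _].
  have k_neq0 : k%:R != 0 :> R by rewrite pnatr_eq0 -lt0n.
  by rewrite [k%:R ^+ e.+1]exprS; field.
rewrite (eq_big_nat _ _ (fun k _ => congr1 _ (horner_coef_wide k%:R size_p))).
under eq_big_nat => k _ do rewrite mulr_sumr.
rewrite exchange_big !big_ord_recl /bump /= big1 ?add0r => [|k _]; last by rewrite p0 !mul0r mulr0.
rewrite (monomial 0%N) // mulr1 big1 ?addr0 // => i _.
by rewrite (monomial i.+1) ?mulr0 // ltnW.
Qed.

Section Faulhaber.

Variable B : nat -> rat.
Hypothesis hB : bernoulli_gf B.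

Lemma bernoulli_gf_recurrence (r : nat) :
  \sum_(0 <= t < r.+1) B t / t`!%:R / (r.+1 - t)`!%:R = (r == 0)%:R.
Proof.
rewrite -[RHS](hB r.+1) [RHS]big_nat_recr //= subnn mul0r addr0.
apply: eq_big_nat => t /andP[_ lttr].
by rewrite subn_gt0 lttr mul1r mulrC mulrA.
Qed.

Definition faulhaber_poly (p : nat) : {poly rat} :=
  p`!%:R *: \sum_(0 <= t < p.+1) (B t / t`!%:R / (p.+1 - t)`!%:R) *: 'X^(p.+1 - t).

Lemma faulhaber_poly_step (p : nat) (x : rat) :
  (faulhaber_poly p).[x + 1] - (faulhaber_poly p).[x] = x ^+ p.
Proof.
have regroup (u v w z : rat) : u * (v * (w * z)) = v * w * (u * z) by ring.
rewrite !hornerZ -mulrBr !horner_sum -sumrB.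
under eq_big_nat => t /andP[_ ltpt].
  rewrite !hornerZ !hornerXn -mulrBr mulrAC -mulrA subSn // exprD1_sub_div_fact mulr_sumr.
  over.
rewrite sum_nat_triangle.
under eq_big_nat => l /andP[_ ltlp].
  under eq_big_nat => t /andP[_ lttl].
    rewrite (_ : ((p - t).+1 - l)%N = ((p - l).+1 - t)%N); last by lia.
    rewrite natrM invfM regroup.
    over.
  rewrite -mulr_sumr bernoulli_gf_recurrence.
  over.
rewrite big_nat_recr //= subnn eqxx mulr1 big1_seq ?add0r; last first.
  by move=> l /andP[_]; rewrite mem_index_iota => /andP[_ ltlp]; rewrite subn_eq0 leqNgt ltlp mulr0.
by rewrite mulrCA mulfV ?mulr1 // natr_fact_neq0.
Qed.

Lemma coef_faulhaber_poly (p i : nat) : (faulhaber_poly p)`_i =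
  p`!%:R * \sum_(0 <= t < p.+1) B t / t`!%:R / (p.+1 - t)`!%:R * (i == (p.+1 - t)%N)%:R.
Proof. by rewrite coefZ coef_sum; congr (_ * _); apply: eq_bigr => t _; rewrite coefZ coefXn. Qed.

Lemma coef0_faulhaber_poly (p : nat) : (faulhaber_poly p)`_0 = 0.
Proof.
rewrite coef_faulhaber_poly big1_seq ?mulr0 // => t /andP[_].
by rewrite mem_index_iota => /andP[_ ltpt]; rewrite eq_sym subn_eq0 leqNgt ltpt mulr0.
Qed.

Lemma coef1_faulhaber_poly (p : nat) : (faulhaber_poly p)`_1 = B p.
Proof.
rewrite coef_faulhaber_poly big_nat_recr //= subSnn eqxx mulr1 big1_seq ?add0r.
  by rewrite /= divr1 mulrCA mulfV ?mulr1 // natr_fact_neq0.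
move=> t /andP[_]; rewrite mem_index_iota => /andP[_ lttp].
by rewrite (_ : (1 == p.+1 - t)%N = false) ?mulr0 //; lia.
Qed.

Lemma size_faulhaber_poly (p : nat) : (size (faulhaber_poly p) <= p.+2)%N.
Proof.
apply/leq_sizeP => i lepi; rewrite coef_faulhaber_poly big1_seq ?mulr0 // => t _.
by rewrite (_ : (i == p.+1 - t)%N = false) ?mulr0 //; lia.
Qed.

Lemma horner_faulhaber_poly (p k : nat) :
  (faulhaber_poly p).[k%:R] = \sum_(0 <= i < k) i%:R ^+ p.
Proof.
elim: k => [|k IHk]; first by rewrite big_geq // horner_coef0 coef0_faulhaber_poly.
by rewrite big_nat_recr //= -IHk -(faulhaber_poly_step p) -natr1 addrC subrK.
Qed.

Definition pow_conv_poly (a b : nat) : {poly rat} :=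
  \sum_(0 <= j < a.+1) ((-1) ^+ j * 'C(a, j)%:R) *: ('X^(a - j) * faulhaber_poly (b + j)).

Lemma horner_pow_conv_poly (a b k : nat) :
  (pow_conv_poly a b).[k%:R] = \sum_(0 <= i < k) i%:R ^+ b * (k - i)%:R ^+ a.
Proof.
rewrite horner_sum.
under eq_big_nat => j _ do rewrite hornerZ hornerM hornerXn horner_faulhaber_poly !mulr_sumr.
rewrite exchange_big_nat; apply: eq_big_nat => i /andP[_ ltik].
rewrite natrB; last exact: ltnW.
rewrite exprDn big_mkord mulr_sumr; apply: eq_bigr => j _.
rewrite (exprNn i%:R) exprD.
set s := (-1) ^+ j; set u := k%:R ^+ (a - j); set v := i%:R ^+ j; set w := i%:R ^+ b.
by ring.
Qed.

Lemma coef0_pow_conv_poly (a b : nat) : (pow_conv_poly a b)`_0 = 0.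
Proof.
rewrite coef_sum big1 // => j _.
by rewrite coefZ coefXnM; case: ifP; rewrite ?sub0n ?coef0_faulhaber_poly mulr0.
Qed.

Lemma coef1_pow_conv_poly (a b : nat) : (pow_conv_poly a b)`_1 = (-1) ^+ a * B (b + a).
Proof.
rewrite coef_sum big_nat_recr //= big1_seq ?add0r.
  by rewrite coefZ coefXnM subnn /= subn0 coef1_faulhaber_poly binn mulr1.
move=> j /andP[_]; rewrite mem_index_iota => /andP[_ ltja].
rewrite coefZ coefXnM; case: ifP => [_|]; first by rewrite mulr0.
by move=> ?; rewrite (_ : (1 - (a - j) = 0)%N) ?coef0_faulhaber_poly ?mulr0 //; lia.
Qed.

Lemma size_pow_conv_poly (a b : nat) : (size (pow_conv_poly a b) <= (a + b).+2)%N.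
Proof.
apply/leq_sizeP => i leabi; rewrite coef_sum big1_seq // => j /andP[_].
rewrite mem_index_iota => /andP[_ ltja]; rewrite coefZ coefXnM; case: ifP => _.
  by rewrite mulr0.
by rewrite (leq_sizeP _ _ (size_faulhaber_poly (b + j))) ?mulr0 //; lia.
Qed.

End Faulhaber.

Theorem theorem2 (B : nat -> rat) (hB : bernoulli_gf B) (m n a : nat)
    (ham : (a <= m)%N) (hmn : (m <= n)%N) :
  B m = (-1) ^+ a *
    \sum_(1 <= k < n.+2)
      ((-1) ^+ k.+1 / k%:R * ('C(n.+1, k))%:R *
        (\sum_(1 <= i < k) (i%:R ^+ a * (k - i)%:R ^+ (m - a))
         + (a == m)%:R * k%:R ^+ m))
  /\
  ((2 <= m)%N ->
   B m = (-1) ^+ a *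
    \sum_(1 <= k < n.+2)
      ((-1) ^+ k.+1 / k%:R * ('C(n.+1, k))%:R *
        \sum_(1 <= i < k) (i%:R ^+ a * (k - i)%:R ^+ (m - a)))).
Proof.
set p := pow_conv_poly B a (m - a).
have size_p : (size p <= n.+2)%N by apply: leq_trans (size_pow_conv_poly _ _ _) _; lia.
have p1 : p`_1 = (-1) ^+ a * B m by rewrite coef1_pow_conv_poly subnK.
split.
  rewrite -(sum_sign_binom_horner (coef0_pow_conv_poly _ _ _) size_p) in p1.
  rewrite -[LHS](signrMK a) -p1; congr (_ * _); apply: eq_big_nat => k /andP[k_gt0 _].
  by rewrite sum_pow_mul_pow_rev // horner_pow_conv_poly.
move=> m_ge2; set q := p - (a == m)%:R *: 'X^m.
have q0 : q`_0 = 0.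
  by rewrite coefB coefZ coefXn coef0_pow_conv_poly (_ : (0 == m)%N = false) ?mulr0 ?subr0 //; lia.
have q1 : q`_1 = (-1) ^+ a * B m.
  by rewrite coefB coefZ coefXn p1 (_ : (1 == m)%N = false) ?mulr0 ?subr0 //; lia.
have size_q : (size q <= n.+2)%N.
  apply/leq_sizeP => i le_i; rewrite coefB coefZ coefXn (leq_sizeP _ _ size_p) //.
  by rewrite (_ : (i == m)%N = false) ?mulr0 ?subr0 //; lia.
rewrite -(sum_sign_binom_horner q0 size_q) in q1.
rewrite -[LHS](signrMK a) -q1; congr (_ * _); apply: eq_big_nat => k /andP[k_gt0 _].
rewrite -[X in _ = _ * X](addrK ((a == m)%:R * k%:R ^+ m)) sum_pow_mul_pow_rev //.
by rewrite hornerD hornerN hornerZ hornerXn horner_pow_conv_poly.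
Qed.
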